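(* Let $\mathcal{M}=(E,\mathcal{C}^* )$ be a uniform oriented matroid of rank $r\ge 2$ and let $T$ be a tope of $\mathcal{M}$. Let $\mathcal{C}_T=\{X\in\mathcal{C}^*: X< T\}$ and $\mathcal{A}=\{X^0: X\in\mathcal{C}_T\}$. Then $\mathcal{A}$ is a $d$-dimensional abstract polytope on the ground set $E$, where $d=r-1$. Moreover, the graph $G(T)$ of $T$ is isomorphic to the graph $G_{abs}(\mathcal{A})$ of $\mathcal{A}$ (via $X\mapsto X^0$).
   Context: Sign vectors: for a finite set $E$ and $X\in\{+,-,0\}^E$, write $X^+=\{e:X_e=+\}$, $X^-=\{e:X_e=-\}$, $X^0=\{e:X_e=0\}$, $\operatorname{supp}(X)=X^+\cup X^-$, and $-X$ for the componentwise negation. For sign vectors $X,Y$, the separating set is $S(X,Y)=(X^+\cap Y^-)\cup(X^-\cap Y^+)$, and the composition $X\circ Y$ is given by $(X\circ Y)_e=X_e$ if $X_e\neq 0$ and $(X\circ Y)_e=Y_e$ otherwise. An oriented matroid $\mathcal{M}=(E,\mathcal{C}^* )$ is a finite set $E$ together with a set $\mathcal{C}^*\subseteq\{+,-,0\}^E$ of (signed) cocircuits satisfying: (CC0) $\mathbf{0}\notin\mathcal{C}^*$; (CC1) $X\in\mathcal{C}^*\Rightarrow -X\in\mathcal{C}^*$; (CC2) if $X,Y\in\mathcal{C}^*$ and $\operatorname{supp}(X)\subseteq\operatorname{supp}(Y)$ then $X=\pm Y$; (CC3) if $X,Y\in\mathcal{C}^*$, $X\neq -Y$ and $e\in S(X,Y)$,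 then there is $Z\in\mathcal{C}^*$ with $Z^+\subseteq (X^+\cup Y^+)\setminus\{e\}$ and $Z^-\subseteq (X^-\cup Y^-)\setminus\{e\}$. The covectors of $\mathcal{M}$ are $\mathbf{0}$ together with all compositions $X^1\circ\cdots\circ X^k$ ($k\ge 1$) of cocircuits, partially ordered componentwise by $0<+$ and $0<-$ ($+,-$ incomparable); $X<T$ refers to this order. The rank $r$ of $\mathcal{M}$ is the largest $k$ such that there is a chain $\mathbf{0}=V_0<V_1<\cdots<V_k$ of covectors. $\mathcal{M}$ is uniform if $|X^0|=r-1$ for every cocircuit $X$. A tope is a covector that is maximal in this order. The cocircuit graph $G^*(\mathcal{M})$ has the cocircuits as vertices, with distinct cocircuits $X,Y$ adjacent iff $|X^0\cap Y^0|\ge r-2$ and $S(X,Y)=\emptyset$. The graph $G(T)$ of a tope $T$ is the subgraph of $G^*(\mathcal{M})$ induced by the cocircuits $X$ with $X<T$. Abstract polytope: for a finite set $T_0$, a family $\mathcal{A}$ of subsets of $T_0$ (called vertices) is a $d$-dimensional abstract polytope on ground set $T_0$ if (i) every vertex has cardinality $d$; (ii) every $(d-1)$-element subset of $T_0$ is contained in either no vertex or exactly two vertices (these two are called adjacent); (iii) for any two distinct vertices $X,Y\in\mathcal{A}$ there is a sequence $X=Z_0,Z_1,\dots,Z_k=Y$ of vertices with $Z_i,Z_{i+1}$ adjacent for all $i$ and $X\cap Y\subseteq Z_i$ for all $i$. The graph $G_{abs}(\mathcal{A})$ has vertex set $\mathcal{A}$ and edges between adjacent vertices as in (ii). *)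

(* Sign vectors over a finite ground set E are encoded as
   finite functions E -> option bool:  None = 0,  Some true = +,  Some false = -. *)
From mathcomp Require Import all_boot.
Set Implicit Arguments. Unset Strict Implicit. Unset Printing Implicit Defensive.

Definition svec (E : finType) := {ffun E -> option bool}.

Section SignVectors.
Variable E : finType.
Implicit Types X Y Z V T : svec E.

Definition zerov : svec E := [ffun _ => None].
Definition posv X : {set E} := [set e | X e == Some true].
Definition negset X : {set E} := [set e | X e == Some false].
Definition zerset X : {set E} := [set e | X e == None].
Definition supp X : {set E} := posv X :|: negset X.
Definition oppv X : svec E := [ffun e => omap negb (X e)].
Definition sepset X Y : {set E} :=
  (posv X :&: negset Y) :|: (negset X :&: posv Y).
Definition compv X Y : svec E :=
  [ffun e => if X e is Some b then Some b else Y e].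

Definition sle X Y : bool := [forall e, (X e == None) || (X e == Y e)].
Definition slt X Y : bool := sle X Y && (X != Y).

Definition is_OM (C : {set svec E}) : Prop :=
  [/\ zerov \notin C,
      (forall X, X \in C -> oppv X \in C),
      (forall X Y, X \in C -> Y \in C -> supp X \subset supp Y ->
         X = Y \/ X = oppv Y)
    & (forall X Y e, X \in C -> Y \in C -> X <> oppv Y -> e \in sepset X Y ->
         exists2 Z, Z \in C &
           (posv Z \subset (posv X :|: posv Y) :\ e) /\
           (negset Z \subset (negset X :|: negset Y) :\ e))].

Definition covector (C : {set svec E}) V : Prop :=
  exists s : seq (svec E), all (fun X => X \in C) s /\ V = foldr compv zerov s.

Definition has_chain (C : {set svec E}) (k : nat) : Prop :=
  exists W : nat -> svec E,
    [/\ W 0 = zerov,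
        (forall i, i <= k -> covector C (W i))
      & (forall i, i < k -> slt (W i) (W i.+1))].

Definition is_rank (C : {set svec E}) (r : nat) : Prop :=
  has_chain C r /\ (forall k, has_chain C k -> k <= r).

Definition uniform (C : {set svec E}) (r : nat) : Prop :=
  forall X, X \in C -> #|zerset X| = r - 1.

Definition is_tope (C : {set svec E}) T : Prop :=
  covector C T /\ ~ (exists V, covector C V /\ slt T V).

Definition cocirc_adj (r : nat) X Y : bool :=
  [&& X != Y, r - 2 <= #|zerset X :&: zerset Y| & sepset X Y == set0].

Definition abs_adj (A : {set {set E}}) (d : nat) (P Q : {set E}) : bool :=
  [&& P \in A, Q \in A, P != Q &
      [exists S : {set E}, [&& #|S| == d.-1, S \subset P & S \subset Q]]].

Definition abstract_polytope (A : {set {set E}}) (d : nat) : Prop :=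
  [/\ (forall P, P \in A -> #|P| = d),
      (forall S : {set E}, #|S| = d.-1 ->
         #|[set P in A | S \subset P]| = 0 \/ #|[set P in A | S \subset P]| = 2)
    & (forall P Q, P \in A -> Q \in A -> P != Q ->
         exists s : seq {set E},
           [/\ path (abs_adj A d) P s, last P s = Q &
               all (fun Z : {set E} => P :&: Q \subset Z) (P :: s)])].

End SignVectors.

(* Write m = r - 1.

   1. Uniformity forces every m-subset of E to be a cocircuit zero set
      (zerset_onto): induction on m, contracting a point picked from a
      maximal chain of covectors, and exchanging points by elimination.
   2. Hence T has full support, and the cocircuits below T are those that
      agree with T wherever they are nonzero.  Two of them with the same
      zero set coincide, at most two contain a given (m-1)-set
      (ridge_at_most_two), and across every ridge of a vertex there is a
      neighbouring vertex (neighbour).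
   3. For D, L subsets of E, the cocircuits agreeing with T off D whose zero
      sets contain L and avoid D form a connected graph (face_connected),
      by induction on the number of points outside D and L, deleting or
      contracting one of them. *)
From mathcomp Require Import all_boot zify.
Set Implicit Arguments. Unset Strict Implicit. Unset Printing Implicit Defensive.

Section SignVectors.
Variable E : finType.
Implicit Types (X Y Z V W : svec E) (s : seq (svec E)).

Lemma in_zerset X e : (e \in zerset X) = (X e == None).
Proof. by rewrite inE. Qed.

Lemma zerset_opp X : zerset (oppv X) = zerset X.
Proof. by apply/setP=> e; rewrite !inE ffunE; case: (X e). Qed.

Lemma oppvK X : oppv (oppv X) = X.
Proof. by apply/ffunP=> e; rewrite !ffunE; case: (X e) => [[]|]. Qed.

Lemma supp_zerset X : supp X = ~: zerset X.
Proof. by apply/setP=> e; rewrite !inE; case: (X e) => [[]|]. Qed.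

Lemma some_of_nonzero (o : option bool) : o != None -> exists b, o = Some b.
Proof. by case: o => [b|] // _; exists b. Qed.

Lemma composition_zero s e :
  ((foldr (@compv E) (zerov E) s) e == None) = all (fun X => X e == None) s.
Proof.
elim: s => [|X s IH] /=; first by rewrite ffunE.
by rewrite ffunE; case: (X e).
Qed.

Lemma composition_onto s X g :
  foldr (@compv E) X s g =
  if foldr (@compv E) (zerov E) s g is Some b then Some b else X g.
Proof.
elim: s => [|Y s IH] /=; first by rewrite ffunE.
by rewrite !ffunE IH; case: (Y g).
Qed.

Lemma sleP X Y : sle X Y -> forall e, X e = None \/ X e = Y e.
Proof. by move/forallP=> h e; case/orP: (h e) => /eqP; [left|right]. Qed.

Lemma slt_zerset_proper V W : slt V W -> zerset W \proper zerset V.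
Proof.
case/andP=> /sleP h neq; rewrite properE; apply/andP; split.
  apply/subsetP=> g; rewrite !inE => /eqP Wg.
  by case: (h g) => ->; rewrite ?Wg.
apply/negP=> sub; case/negP: neq; apply/eqP/ffunP=> g.
case Vg: (V g) => [b|]; first by case: (h g); rewrite Vg.
have : g \in zerset V by rewrite inE Vg.
by move/(subsetP sub); rewrite inE => /eqP ->.
Qed.

End SignVectors.

Section EqualSizeSets.
Variables (E : finType) (m : nat) (P Q : {set E}).
Hypotheses (cardP : #|P| = m) (cardQ : #|Q| = m) (neqPQ : P != Q).

Lemma meet_lt : #|P :&: Q| < m.
Proof.
have le : #|P :&: Q| <= m by rewrite -cardP subset_leq_card ?subsetIl.
have ne : #|P :&: Q| != m.
  apply/eqP=> e; case/negP: neqPQ.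
  have eP : P :&: Q == P by rewrite eqEcard subsetIl e cardP leqnn.
  have eQ : P :&: Q == Q by rewrite eqEcard subsetIr e cardQ leqnn.
  by rewrite -(eqP eP) (eqP eQ).
by rewrite ltn_neqAle ne le.
Qed.

Lemma meet_ridge (S : {set E}) : S \subset P -> S \subset Q -> #|S| = m.-1 ->
  #|P :&: Q| = m.-1.
Proof.
move=> SP SQ cS.
have : #|S| <= #|P :&: Q| by apply: subset_leq_card; rewrite subsetI SP SQ.
by have := meet_lt; lia.
Qed.

End EqualSizeSets.

Lemma ridge_split (E : finType) (P S : {set E}) m : 0 < m -> #|P| = m ->
  S \subset P -> #|S| = m.-1 -> exists2 x, P = x |: S & x \notin S.
Proof.
move=> m0 cP SP cS.
have [x xP xS] : exists2 x, x \in P & x \notin S.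
  by apply/subsetPn; apply/negP=> /subset_leq_card; rewrite cP cS; lia.
exists x => //; apply/eqP; rewrite eq_sym eqEcard subUset sub1set xP SP.
by rewrite cardsU1 xS cP cS; lia.
Qed.

Section Covectors.
Variables (E : finType) (C : {set svec E}).

Lemma covector_zerset (L : {set E}) V :
  (forall X, X \in C -> L \subset zerset X) -> covector C V -> L \subset zerset V.
Proof.
move=> hC [s [hs ->]]; apply/subsetP=> e eL; rewrite inE composition_zero.
by apply/allP=> X Xs; have := subsetP (hC X (allP hs X Xs)) e eL; rewrite inE.
Qed.

(* A nonzero covector lies above some cocircuit (its first factor). *)
Lemma covector_above_cocircuit V : covector C V -> V != zerov E ->
  exists2 Y, Y \in C & zerset V \subset zerset Y.
Proof.
move=> [[|Y s] [hs ->]]; first by rewrite eqxx.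
move=> _; exists Y; first by case/andP: hs.
by apply/subsetP=> e; rewrite !inE composition_zero /= => /andP[].
Qed.

Lemma covector_contract V z : covector C V -> V z = None ->
  covector [set X in C | X z == None] V.
Proof.
move=> [s [hs ->]] Vz; exists s; split=> //.
have /esym hz := composition_zero s z; rewrite Vz eqxx in hz.
by apply/allP=> X Xs; rewrite inE (allP hs X Xs) (allP hz X Xs).
Qed.

Lemma chain_zerset_card (L : {set E}) m (W : nat -> svec E) k :
  (forall X, X \in C -> #|zerset X| = #|L| + m) ->
  W 0 = zerov E -> (forall i, i <= k -> covector C (W i)) ->
  (forall i, i < k -> slt (W i) (W i.+1)) ->
  forall i, 0 < i <= k -> #|zerset (W i)| + i <= #|L| + m + 1.
Proof.
move=> hC W0 Wc Wl; elim=> [//|[|i] IH] /andP[_ hi].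
  have W1 : W 1 != zerov E.
    by have := Wl 0 hi; rewrite W0 => /andP[_]; rewrite eq_sym.
  have [Y YC /subset_leq_card] := covector_above_cocircuit (Wc 1 hi) W1.
  by rewrite (hC Y YC); lia.
by have := IH (ltnW hi); have := proper_card (slt_zerset_proper (Wl _ hi)); lia.
Qed.

Lemma chain_zerset_mono (W : nat -> svec E) k :
  (forall i, i < k -> slt (W i) (W i.+1)) ->
  forall i j, i <= j -> j <= k -> zerset (W j) \subset zerset (W i).
Proof.
move=> Wl i; elim=> [|j IH] ij jk; first by have -> : i = 0 by lia.
case: (leqP i j) => [lij|lji]; last by have -> : i = j.+1 by lia.
exact: subset_trans (proper_sub (slt_zerset_proper (Wl _ jk))) (IH lij (ltnW jk)).
Qed.

End Covectors.

Section Elimination.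
Variable E : finType.
Implicit Types (X Y Z : svec E) (C : {set svec E}).

(* Axiom (CC3), stated for any set of sign vectors so that it can be
   transported to contractions. *)
Definition elimination_axiom C := forall X Y e, X \in C -> Y \in C ->
  X <> oppv Y -> e \in sepset X Y ->
  exists2 Z, Z \in C & (posv Z \subset (posv X :|: posv Y) :\ e) /\
                       (negset Z \subset (negset X :|: negset Y) :\ e).

Definition conformal_union Z X Y :=
  forall g c, Z g = Some c -> X g = Some c \/ Y g = Some c.

Lemma conformal_union_zerset Z X Y : conformal_union Z X Y ->
  zerset X :&: zerset Y \subset zerset Z.
Proof.
move=> h; apply/subsetP=> g; rewrite !inE => /andP[/eqP Xg /eqP Yg].
by case Zg: (Z g) => [c|] //; case: (h _ _ Zg); rewrite ?Xg ?Yg.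
Qed.

Lemma eliminate C X Y e b : elimination_axiom C -> X \in C -> Y \in C ->
  X <> oppv Y -> X e = Some b -> Y e = Some (~~ b) ->
  exists2 Z, Z \in C & Z e = None /\ conformal_union Z X Y.
Proof.
move=> el XC YC nXY Xe Ye.
have : e \in sepset X Y by rewrite !inE Xe Ye; case: b {Xe Ye}.
case/(el _ _ _ XC YC nXY) => Z ZC [sp sn]; exists Z => //; split.
- case Ze: (Z e) => [[]|] //.
  + have : e \in posv Z by rewrite inE Ze.
    by move/(subsetP sp); rewrite !inE eqxx.
  + have : e \in negset Z by rewrite inE Ze.
    by move/(subsetP sn); rewrite !inE eqxx.
- move=> g [] Zg.
  + have : g \in posv Z by rewrite inE Zg.
    by move/(subsetP sp); rewrite !inE => /andP[_ /orP[]] /eqP ->; [left|right].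
  + have : g \in negset Z by rewrite inE Zg.
    by move/(subsetP sn); rewrite !inE => /andP[_ /orP[]] /eqP ->; [left|right].
Qed.

Lemma contract_elimination C z : elimination_axiom C ->
  elimination_axiom [set X in C | X z == None].
Proof.
move=> el X Y e; rewrite [X \in _]inE [Y \in _]inE.
move=> /andP[XC /eqP Xz] /andP[YC /eqP Yz] nXY eS.
have [Z ZC [sp sn]] := el _ _ _ XC YC nXY eS.
exists Z => //; rewrite inE ZC /=.
case Zz: (Z z) => [[]|] //.
  have : z \in posv Z by rewrite inE Zz.
  by move/(subsetP sp); rewrite !inE Xz Yz andbF.
have : z \in negset Z by rewrite inE Zz.
by move/(subsetP sn); rewrite !inE Xz Yz andbF.
Qed.

Lemma eliminant_zerset C m X Y Z e (I : {set E}) :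
  (forall X, X \in C -> #|zerset X| = m) -> Z \in C -> Z e = None ->
  conformal_union Z X Y -> I \subset zerset X :&: zerset Y -> m <= #|e |: I| ->
  zerset Z = e |: I.
Proof.
move=> hC ZC Ze hZ IXY cI; apply/eqP; rewrite eq_sym eqEcard hC // cI andbT.
rewrite subUset sub1set in_zerset Ze eqxx /=.
exact: subset_trans IXY (conformal_union_zerset hZ).
Qed.

Lemma orient C X y c : (forall X, X \in C -> oppv X \in C) -> X \in C ->
  X y != None -> exists2 X', X' \in C & zerset X' = zerset X /\ X' y = Some c.
Proof.
move=> Copp XC /some_of_nonzero [b Xy].
case: (eqVneq b c) => [<-|bc]; first by exists X.
exists (oppv X); first exact: Copp.
by rewrite zerset_opp ffunE Xy; split=> //; case: b c bc {Xy} => [] [].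
Qed.

Lemma zerset_exchange C m X1 X2 y (I : {set E}) :
  (forall X, X \in C -> oppv X \in C) -> elimination_axiom C ->
  (forall X, X \in C -> #|zerset X| = m) -> X1 \in C -> X2 \in C ->
  zerset X1 != zerset X2 -> y \notin zerset X1 -> y \notin zerset X2 ->
  I \subset zerset X1 :&: zerset X2 -> m <= #|y |: I| ->
  exists2 Z, Z \in C & zerset Z = y |: I.
Proof.
move=> Copp el hC X1C X2C nX y1 y2 I12 cI.
move: y2; rewrite in_zerset => /some_of_nonzero [b X2y].
have X1y : X1 y != None by rewrite -in_zerset.
have [X1' X1'C [zX1' X1'y]] := orient (~~ b) Copp X1C X1y.
have nopp : X2 <> oppv X1'.
  by move=> e; case/eqP: nX; rewrite -zX1' -zerset_opp -e.
have [Z ZC [Zy hZ]] := eliminate el X2C X1'C nopp X2y X1'y.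
exists Z => //; apply: eliminant_zerset hC ZC Zy hZ _ cI.
by rewrite zX1' setIC.
Qed.

End Elimination.

(* Suppose all cocircuit zero sets contain L
   and have size #|L| + m, that every such set through z is a zero set, and
   that the cocircuit X0 is nonzero at z.  Then every such set H is a zero
   set: points of H outside zerset X0 are exchanged one at a time for points
   of zerset X0 (induction on #|H :\: zerset X0|). *)
Section ExchangeFromContraction.
Variables (E : finType) (C : {set svec E}) (L : {set E}) (m : nat).
Variables (z : E) (X0 : svec E).
Hypothesis Copp : forall X, X \in C -> oppv X \in C.
Hypothesis el : elimination_axiom C.
Hypothesis zero_sets : forall X, X \in C ->
  L \subset zerset X /\ #|zerset X| = #|L| + m.
Hypothesis through_z : forall H : {set E}, z |: L \subset H -> #|H| = #|L| + m ->
  exists2 X, X \in C & zerset X = H.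
Hypotheses (X0C : X0 \in C) (zX0 : z \notin zerset X0).

Let card_zerset X : X \in C -> #|zerset X| = #|L| + m.
Proof. by case/zero_sets. Qed.

Lemma zerset_avoiding (H : {set E}) :
  L \subset H -> #|H| = #|L| + m -> z \notin H -> exists2 X, X \in C & zerset X = H.
Proof.
have [k] := ubnP #|H :\: zerset X0|.
elim: k => // k IHk in H * => hk LH cH zH.
have [LX0 cX0] := zero_sets X0C.
case: (boolP (H \subset zerset X0)) => [sub|/subsetPn[y yH yX0]].
  by exists X0 => //; apply/eqP; rewrite eq_sym eqEcard sub cH cX0 leqnn.
have [w wX0 wH] : exists2 w, w \in zerset X0 & w \notin H.
  apply/subsetPn/negP=> sub; move/negP: yX0; apply.
  by have /eqP -> : zerset X0 == H by rewrite eqEcard sub cH cX0 leqnn.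
have yL : y \notin L by apply: contra yX0; apply: (subsetP LX0).
have LI : L \subset H :\ y.
  apply/subsetP=> x xL; rewrite !inE (subsetP LH x xL) andbT.
  by apply: contraNneq yL => <-.
have zw : z != w by apply: contraNneq zX0 => ->.
have [X2 X2C zX2] : exists2 X, X \in C & zerset X = w |: (H :\ y).
  apply: IHk.
  - have sub : (w |: (H :\ y)) :\: zerset X0 \subset (H :\: zerset X0) :\ y.
      apply/subsetP=> x; rewrite !in_setD !in_setU1 !in_setD1.
      case/andP=> xX0 /orP[/eqP exw|/andP[xy xH]]; first by rewrite exw wX0 in xX0.
      by rewrite in_set1 xy xH xX0.
    have := subset_leq_card sub; have := cardsD1 y (H :\: zerset X0).
    by rewrite in_setD yH yX0 /=; move: hk; clear; lia.
  - exact: subset_trans LI (subsetUr _ _).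
  - by rewrite cardsU1 !inE negb_and wH orbT /= -cH (cardsD1 y H) yH.
  - by rewrite !inE negb_or negb_and zH orbT andbT.
have [X1 X1C zX1] : exists2 X, X \in C & zerset X = z |: (H :\ y).
  apply: through_z; first exact: setUS.
  by rewrite cardsU1 !inE (negbTE zH) andbF /= -cH (cardsD1 y H) yH.
have neqX : zerset X1 != zerset X2.
  apply/eqP=> e; move: (setU11 z (H :\ y)).
  by rewrite -zX1 e zX2 !inE (negbTE zw) (negbTE zH) andbF.
have yX1 : y \notin zerset X1.
  by rewrite zX1 !inE eqxx /= orbF; apply: contraNneq zH => <-.
have yX2 : y \notin zerset X2.
  by rewrite zX2 !inE eqxx /= orbF; apply: contraNneq yX0 => ->.
have IX : H :\ y \subset zerset X1 :&: zerset X2.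
  by rewrite subsetI zX1 zX2 !subsetUr.
have := zerset_exchange Copp el card_zerset X1C X2C neqX yX1 yX2 IX.
by rewrite setD1K // cH; apply.
Qed.

Lemma zerset_from_contraction (H : {set E}) : L \subset H -> #|H| = #|L| + m ->
  exists2 X, X \in C & zerset X = H.
Proof.
move=> LH cH; case: (boolP (z \in H)) => zH; last exact: zerset_avoiding.
by apply: through_z => //; rewrite subUset sub1set zH.
Qed.

End ExchangeFromContraction.

(* The top of a chain of covectors of length m + 2 above the common zeros L
   leaves some point z of L's complement, and contracting z leaves a chain
   of length m + 1; some cocircuit does not vanish at z. *)
Lemma chain_contraction (E : finType) (C : {set svec E}) (L : {set E}) m :
  (forall X, X \in C -> L \subset zerset X /\ #|zerset X| = #|L| + m.+1) ->
  has_chain C m.+2 ->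
  exists z, [/\ z \notin L, has_chain [set X in C | X z == None] m.+1 &
                exists2 X0, X0 \in C & z \notin zerset X0].
Proof.
move=> hC [W [W0 Wc Wl]].
have cc := chain_zerset_card (fun X XC => (hC X XC).2) W0 Wc Wl.
have LW i : i <= m.+2 -> L \subset zerset (W i).
  by move=> hi; apply: covector_zerset (Wc i hi) => X /hC [].
have Wtop : zerset (W m.+2) = L.
  by apply/eqP; rewrite eq_sym eqEcard LW //; have := cc m.+2 (leqnn _); clear; lia.
move/properP: (slt_zerset_proper (Wl _ (ltnSn m.+1))) => [_ [z zW zL]].
rewrite Wtop in zL; exists z; split=> //.
  exists W; split=> // i hi; last by apply/Wl/leqW.
  apply: covector_contract (Wc _ (leqW hi)) _; apply/eqP; rewrite -in_zerset.
  exact: subsetP (chain_zerset_mono Wl hi (ltnW (ltnSn _))) z zW.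
have [s [hs Wse]] := Wc m.+2 (leqnn _).
have : ~~ all (fun X : svec E => X z == None) s.
  by rewrite -composition_zero -Wse -in_zerset Wtop zL.
case/allPn=> X0 X0s X0z; exists X0; first exact: (allP hs X0 X0s).
by rewrite in_zerset.
Qed.

Lemma zerset_onto (E : finType) m : forall (C : {set svec E}) (L : {set E}),
  (forall X, X \in C -> oppv X \in C) -> elimination_axiom C ->
  (forall X, X \in C -> L \subset zerset X /\ #|zerset X| = #|L| + m) ->
  has_chain C m.+1 ->
  forall H : {set E}, L \subset H -> #|H| = #|L| + m ->
  exists2 X, X \in C & zerset X = H.
Proof.
elim: m => [|m IH] C L Copp el hC hch H LH cH.
  case: hch => W [W0 Wc Wl].
  have W1 : W 1 != zerov E.
    by have := Wl 0 isT; rewrite W0 => /andP[_]; rewrite eq_sym.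
  have [Y YC _] := covector_above_cocircuit (Wc 1 isT) W1.
  exists Y => //; have [LY cY] := hC Y YC.
  have /eqP <- : L == zerset Y by rewrite eqEcard LY cY addn0 leqnn.
  by apply/eqP; rewrite eqEcard LH cH addn0 leqnn.
have [z [zL hch' [X0 X0C zX0]]] := chain_contraction hC hch.
have card_zL : #|z |: L| + m = #|L| + m.+1 by rewrite cardsU1 zL add1n addSnnS.
apply: (zerset_from_contraction Copp el hC _ X0C zX0) LH cH => H' zLH' cH'.
set Cz := [set X in C | X z == None].
have Cz_opp X : X \in Cz -> oppv X \in Cz.
  by rewrite !inE => /andP[XC /eqP Xz]; rewrite Copp // ffunE Xz.
have Cz_zero X : X \in Cz -> z |: L \subset zerset X /\ #|zerset X| = #|z |: L| + m.
  rewrite inE => /andP[XC Xz]; have [LX cX] := hC X XC.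
  by rewrite subUset sub1set in_zerset Xz LX card_zL.
have [X XCz zX] : exists2 X, X \in Cz & zerset X = H'.
  apply: (IH Cz (z |: L) Cz_opp (contract_elimination el) Cz_zero hch' H' zLH').
  by rewrite card_zL.
by exists X => //; move: XCz; rewrite inE => /andP[].
Qed.

Lemma point_outside (E : finType) (A B : {set E}) m : m < #|B| -> #|A| = m ->
  exists2 f, f \in B & f \notin A.
Proof.
move=> hB hA; apply/subsetPn/negP=> /subset_leq_card; rewrite hA; lia.
Qed.

Record uniform_tope (E : finType) (C : {set svec E}) (m : nat) (T : svec E) :
  Prop := UniformTope {
  opp_closed : forall X, X \in C -> oppv X \in C;
  elimination : elimination_axiom C;
  support_determines : forall X Y, X \in C -> Y \in C ->
    supp X \subset supp Y -> X = Y \/ X = oppv Y;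
  zerset_card : forall X, X \in C -> #|zerset X| = m;
  zerset_surj : forall H : {set E}, #|H| = m -> exists2 X, X \in C & zerset X = H;
  tope_full : forall e, T e != None;
  dim_pos : 0 < m;
  ground_large : m < #|E| }.

Section TopeGraph.
Variables (E : finType) (C : {set svec E}) (m : nat) (T : svec E).
Hypothesis hT : uniform_tope C m T.
Implicit Types (D L : {set E}) (X Y Z : svec E).

Let Copp := opp_closed hT.
Let el := elimination hT.
Let hC := zerset_card hT.
Let Tfull := tope_full hT.
Let m_gt0 := dim_pos hT.

(* The vertices of the face L of T in the deletion of D: cocircuits whose
   zero set contains L and avoids D, agreeing with T off D where nonzero.
   For D = L = set0 these are exactly the cocircuits below T. *)
Definition face_vertices (D L : {set E}) : {set svec E} :=
  [set X in C | [&& L \subset zerset X, zerset X :&: D == set0 &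
     [forall f, (f \in D) || (X f == None) || (X f == T f)]]].

Definition ridge_adj (V : {set svec E}) : rel (svec E) :=
  fun X Y => [&& X \in V, Y \in V, X != Y & #|zerset X :&: zerset Y| == m.-1].

Lemma ridge_adj_sym V : symmetric (ridge_adj V).
Proof.
by move=> X Y; rewrite /ridge_adj setIC eq_sym; case: (X \in V); case: (Y \in V).
Qed.

Lemma face_verticesP D L X : X \in face_vertices D L ->
  [/\ X \in C, L \subset zerset X, zerset X :&: D = set0 &
      forall f, f \notin D -> X f = None \/ X f = T f].
Proof.
rewrite inE => /and4P[XC LX /eqP XD /forallP h]; split=> // f fD.
by move: (h f); rewrite (negbTE fD) /= => /orP[] /eqP; [left|right].
Qed.

Lemma face_verticesI D L X : X \in C -> L \subset zerset X ->
  zerset X :&: D = set0 -> (forall f, f \notin D -> X f = None \/ X f = T f) ->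
  X \in face_vertices D L.
Proof.
move=> XC LX XD h; rewrite inE XC LX XD eqxx /=; apply/forallP=> f.
case: (boolP (f \in D)) => //= fD; by case: (h f fD) => ->; rewrite eqxx ?orbT.
Qed.

Lemma face_vertex_agrees D L X f : X \in face_vertices D L -> f \notin D ->
  f \notin zerset X -> X f = T f.
Proof.
case/face_verticesP=> _ _ _ hX fD; case: (hX f fD) => // Xf.
by rewrite in_zerset Xf.
Qed.

(* If more than m points survive the deletion, a vertex is determined by its
   zero set: Y = -X is excluded by a point off D where both agree with T. *)
Lemma face_zerset_inj D L X Y : m < #|~: D| ->
  X \in face_vertices D L -> Y \in face_vertices D L ->
  zerset X = zerset Y -> X = Y.
Proof.
move=> hD XV YV eXY.
have [XC _ _ _] := face_verticesP XV; have [YC _ _ _] := face_verticesP YV.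
case: (support_determines hT XC YC); rewrite ?supp_zerset ?eXY // => eopp.
have [f fD fX] := point_outside hD (hC XC); rewrite inE in fD.
have fY : f \notin zerset Y by rewrite -eXY.
have := face_vertex_agrees XV fD fX; rewrite eopp ffunE (face_vertex_agrees YV fD fY).
by move: (Tfull f); case: (T f) => [[]|].
Qed.

Definition disagreement (D : {set E}) (Y : svec E) : {set E} :=
  [set f | [&& f \notin D, Y f != None & Y f != T f]].

(* Every vertex X has a neighbour across each ridge zerset X :\ a (a not in L):
   start from any cocircuit with zero set b |: (zerset X :\ a), b a point off
   D and off zerset X, oriented like T at a, and repeatedly eliminate a point
   where it disagrees with T against X. *)
Section Neighbour.
Variables (D L : {set E}) (X : svec E) (a : E).
Hypotheses (XV : X \in face_vertices D L) (aX : a \in zerset X) (aL : a \notin L).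

Let S := zerset X :\ a.

Let cardS : #|S| = m.-1.
Proof.
have [XC _ _ _] := face_verticesP XV.
by have := cardsD1 a (zerset X); rewrite aX hC // => ->.
Qed.

Let aS : a \notin S.
Proof. by rewrite !inE eqxx. Qed.

Lemma agreeing_neighbour Y b : Y \in C -> b \notin D -> b \notin zerset X ->
  zerset Y = b |: S -> Y a = T a -> disagreement D Y = set0 ->
  [/\ Y \in face_vertices D L, Y != X & S \subset zerset Y].
Proof.
move=> YC bD bX zY Ya d0; have [_ LX XD _] := face_verticesP XV.
split; last by rewrite zY subsetUr.
- apply: face_verticesI => //.
  + apply/subsetP=> x xL; rewrite zY in_setU1 in_setD1 (subsetP LX x xL) andbT.
    by apply/orP; right; apply: contraNneq aL => <-.
  + apply/setP=> x; rewrite in_setI in_set0 zY in_setU1.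
    apply/negP=> /andP[/orP[/eqP exb|xS] xD]; first by rewrite -exb xD in bD.
    have : x \in zerset X :&: D by rewrite in_setI (subsetP (subD1set _ _) x xS) xD.
    by rewrite XD in_set0.
  + move=> f fD; case Yf: (Y f) => [c|]; [right|by left].
    have : f \notin disagreement D Y by rewrite d0 in_set0.
    by rewrite inE fD Yf /= negbK => /eqP.
- by apply/eqP=> eYX; move: (Tfull a); rewrite -Ya eYX -in_zerset aX.
Qed.

(* Eliminating a point of disagreement f against X keeps a cocircuit through
   the ridge on T's side at a, and strictly shrinks the disagreement. *)
Lemma repair_neighbour Y b : Y \in C -> b \notin D -> b \notin zerset X ->
  zerset Y = b |: S -> Y a = T a ->
  exists2 Y', Y' \in face_vertices D L & (Y' != X) && (S \subset zerset Y').
Proof.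
have [XC _ _ hX] := face_verticesP XV.
have [k] := ubnP #|disagreement D Y|.
elim: k => // k IH in Y b * => hk YC bD bX zY Ya.
case: (set_0Vmem (disagreement D Y)) => [d0|[f fdis]].
  have [YV nYX SY] := agreeing_neighbour YC bD bX zY Ya d0.
  by exists Y; rewrite // nYX SY.
move: (fdis); rewrite inE => /and3P[fD /some_of_nonzero [c Yf] Yft].
have [t Tft] := some_of_nonzero (Tfull f).
have ct : c = ~~ t by move: Yft; rewrite Yf Tft; case: c t {Yf Tft fdis} => [] [].
have fX : f \notin zerset X.
  apply/negP=> fX; case: (eqVneq f a) => [efa|nfa].
    by move: Yft; rewrite efa Ya eqxx.
  have : f \in zerset Y by rewrite zY in_setU1 in_setD1 nfa fX orbT.
  by rewrite in_zerset Yf.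
have Xf : X f = Some t by rewrite (face_vertex_agrees XV fD fX).
have nXY : X <> oppv Y.
  move=> eXY; move: (Tfull a); rewrite -Ya.
  by move: aX; rewrite eXY zerset_opp in_zerset => /eqP ->.
rewrite ct in Yf; have [Z ZC [Zf hZ]] := eliminate el XC YC nXY Xf Yf.
have fS : f \notin S by apply: contra fX; apply: subsetP; apply: subD1set.
have zZ : zerset Z = f |: S.
  apply: eliminant_zerset hC ZC Zf hZ _ _.
    by rewrite subsetI subD1set zY subsetUr.
  by rewrite cardsU1 fS cardS add1n prednK.
have Za : Z a = T a.
  have : a \notin zerset Z.
    by rewrite zZ in_setU1 (negbTE aS) orbF; apply: contraNneq fX => <-.
  rewrite in_zerset => /some_of_nonzero [c' Za]; rewrite Za.
  by case: (hZ _ _ Za) => [Xa|<- //]; move: aX; rewrite in_zerset Xa.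
apply: (IH Z f) => //.
have sub : disagreement D Z \subset disagreement D Y :\ f.
  apply/subsetP=> g; rewrite inE => /and3P[gD /some_of_nonzero [c' Zg] Zgt].
  rewrite in_setD1 inE gD /=.
  case: (hZ _ _ Zg) => [Xg|Yg].
    by case: (hX g gD); rewrite Xg // => e; move: Zgt; rewrite Zg -e eqxx.
  rewrite Yg -Zg Zgt Zg /= !andbT; apply/eqP=> egf; move: Zg; by rewrite egf Zf.
have := subset_leq_card sub; have := cardsD1 f (disagreement D Y).
by rewrite fdis; move: hk; clear; lia.
Qed.

Lemma neighbour : m < #|~: D| ->
  exists2 Y, Y \in face_vertices D L & (Y != X) && (S \subset zerset Y).
Proof.
move=> hD; have [XC _ _ _] := face_verticesP XV.
have [b bD bX] := point_outside hD (hC XC); rewrite inE in bD.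
have bS : b \notin S by apply: contra bX; apply: subsetP; apply: subD1set.
have [Y0 Y0C zY0] : exists2 Y, Y \in C & zerset Y = b |: S.
  by apply: (zerset_surj hT); rewrite cardsU1 bS cardS add1n prednK.
have Y0a : Y0 a != None.
  by rewrite -in_zerset zY0 in_setU1 (negbTE aS) orbF; apply: contraNneq bX => <-.
have [t Ta] := some_of_nonzero (Tfull a).
have [Y YC [zY Ya]] := orient t Copp Y0C Y0a.
by apply: (repair_neighbour YC bD bX); rewrite ?zY ?Ta.
Qed.

End Neighbour.

Lemma face_vertices_empty D L X : m < #|~: D| -> ~: (D :|: L) = set0 ->
  X \notin face_vertices D L.
Proof.
move=> hD e0; apply/negP=> XV; have [XC LX _ _] := face_verticesP XV.
have sub : ~: D \subset zerset X.
  apply/subsetP=> x xD; apply: (subsetP LX); apply/negPn/negP=> xL.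
  have : x \in ~: (D :|: L) by rewrite !inE negb_or -(in_setC x D) xD xL.
  by rewrite e0 in_set0.
by have := subset_leq_card sub; rewrite (hC XC) leqNgt hD.
Qed.

(* With exactly m + 1 points off D, distinct vertices are adjacent: their
   zero sets both lie in those m + 1 points. *)
Lemma face_vertices_adjacent D L X Y : #|~: D| = m.+1 ->
  X \in face_vertices D L -> Y \in face_vertices D L ->
  connect (ridge_adj (face_vertices D L)) X Y.
Proof.
move=> hD XV YV; case: (eqVneq X Y) => [->|nXY]; first exact: connect0.
apply: connect1; rewrite /ridge_adj XV YV nXY /=.
have [XC _ XD _] := face_verticesP XV; have [YC _ YD _] := face_verticesP YV.
have nz : zerset X != zerset Y.
  by apply: contra_neq nXY; apply: face_zerset_inj XV YV; rewrite hD.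
have lt := meet_lt (hC XC) (hC YC) nz.
have sub : zerset X :|: zerset Y \subset ~: D.
  by rewrite subUset -!disjoints_subset -!setI_eq0 XD YD eqxx.
have := subset_leq_card sub; have := cardsUI (zerset X) (zerset Y).
rewrite (hC XC) (hC YC) hD; move: lt; clear; move=> h1 h2 h3; apply/eqP; lia.
Qed.

(* For a free point e (neither in D
   nor in L), the vertices split into those vanishing at e, which form the
   contracted face for e |: L, and those nonzero at e, which are vertices of
   the deletion of e |: D lying on T's side of e.  Both smaller graphs are
   connected by induction; a path in the deletion either stays on T's side
   or crosses e, and crossing an edge produces, by elimination, a vertex of
   the contraction adjacent to its start. *)
Section ConnectivityStep.
Variables (D L : {set E}) (e : E).
Hypotheses (eD : e \notin D) (eL : e \notin L) (hD : m < #|~: D|).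

Let V := face_vertices D L.
Let Vdel := face_vertices (e |: D) L.
Let Vcon := face_vertices D (e |: L).
Let R := ridge_adj V.

Hypothesis Vdel_connected : forall X Y, X \in Vdel -> Y \in Vdel ->
  connect (ridge_adj Vdel) X Y.
Hypothesis Vcon_connected : forall X Y, X \in Vcon -> Y \in Vcon ->
  connect (ridge_adj Vcon) X Y.

Let Vcon_sub W : W \in Vcon -> W \in V.
Proof.
move=> WQ; have [WC LW WD hW] := face_verticesP WQ; apply: face_verticesI => //.
exact: subset_trans (subsetUr _ _) LW.
Qed.

Let Vdel_sub Z : Z \in Vdel -> Z e = T e -> Z \in V.
Proof.
move=> ZV Ze; have [ZC LZ ZD hZ] := face_verticesP ZV; apply: face_verticesI => //.
  by apply/eqP; rewrite -subset0 -ZD; apply/setIS/subsetUr.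
move=> f fD; case: (eqVneq f e) => [->|fe]; first by right.
by apply: hZ; rewrite in_setU1 negb_or fe.
Qed.

Let to_Vdel Z : Z \in V -> e \notin zerset Z -> Z \in Vdel /\ Z e = T e.
Proof.
move=> ZV eZ; have [ZC LZ ZD hZ] := face_verticesP ZV.
have Ze : Z e = T e := face_vertex_agrees ZV eD eZ.
split=> //; apply: face_verticesI => //.
  apply/setP=> x; rewrite in_setI in_setU1 in_set0.
  case: (eqVneq x e) => [->|xe] /=; first by rewrite (negbTE eZ).
  apply/negP=> xx; have : x \in zerset Z :&: D by rewrite in_setI.
  by rewrite ZD in_set0.
by move=> f; rewrite in_setU1 negb_or => /andP[_ fD]; exact: hZ.
Qed.

Lemma eliminant_in_contraction Z1 Z2 W : Z1 \in Vdel -> Z2 \in Vdel -> W \in C ->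
  W e = None -> conformal_union W Z1 Z2 ->
  zerset W = e |: (zerset Z1 :&: zerset Z2) -> W \in Vcon.
Proof.
move=> Z1V Z2V WC We hW zW.
have [_ LZ1 Z1D hZ1] := face_verticesP Z1V; have [_ LZ2 _ hZ2] := face_verticesP Z2V.
apply: face_verticesI => //.
- by rewrite zW; apply: setUS; rewrite subsetI LZ1 LZ2.
- apply/setP=> x; rewrite in_setI zW in_setU1 in_set0.
  apply/negP=> /andP[/orP[/eqP xe|xI] xD]; first by move: eD; rewrite -xe xD.
  have : x \in zerset Z1 :&: (e |: D).
    by rewrite in_setI in_setU1 xD orbT andbT; move: xI; rewrite in_setI => /andP[].
  by rewrite Z1D in_set0.
- move=> f fD; case Wf: (W f) => [c|]; [right|by left].
  have fe : f != e by apply/eqP=> efe; move: Wf; rewrite efe We.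
  have fD' : f \notin e |: D by rewrite in_setU1 negb_or fe.
  case: (hW _ _ Wf) => [Zf|Zf].
    by case: (hZ1 f fD') => h; rewrite Zf in h; [discriminate | rewrite h].
  by case: (hZ2 f fD') => h; rewrite Zf in h; [discriminate | rewrite h].
Qed.

Lemma crossing_edge Z1 Z2 : ridge_adj Vdel Z1 Z2 -> Z1 e = T e -> Z2 e != T e ->
  exists2 W, W \in Vcon & R Z1 W.
Proof.
move=> /and4P[Z1V' Z2V' nZ /eqP cZ] Z1e Z2e.
have [Z1C _ _ _] := face_verticesP Z1V'; have [Z2C _ Z2D _] := face_verticesP Z2V'.
have eZ2 : e \notin zerset Z2.
  apply/negP=> eZ; have : e \in zerset Z2 :&: (e |: D) by rewrite in_setI eZ setU11.
  by rewrite Z2D in_set0.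
have [t Tet] := some_of_nonzero (Tfull e).
move: eZ2; rewrite in_zerset => /some_of_nonzero [c Z2ec].
have ct : c = ~~ t by move: Z2e; rewrite Z2ec Tet; case: (c); case: (t).
rewrite ct in Z2ec; rewrite Tet in Z1e.
have nopp : Z1 <> oppv Z2.
  move=> eo; move: cZ; rewrite eo zerset_opp setIid (hC Z2C) => h.
  by move: m_gt0; rewrite -ltn_predL -h ltnn.
have [W WC [We hW]] := eliminate el Z1C Z2C nopp Z1e Z2ec.
set I := zerset Z1 :&: zerset Z2.
have eI : e \notin I by rewrite in_setI in_zerset Z1e.
have zW : zerset W = e |: I.
  by apply: eliminant_zerset hC WC We hW (subxx _) _; rewrite cardsU1 eI cZ add1n prednK.
have WQ := eliminant_in_contraction Z1V' Z2V' WC We hW zW.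
exists W => //; rewrite /R /ridge_adj (Vdel_sub Z1V') ?Tet // (Vcon_sub WQ) /=.
have nz : zerset Z1 != zerset W.
  by apply/eqP=> ez; move: (setU11 e I); rewrite -zW -ez in_zerset Z1e.
rewrite (meet_ridge (hC Z1C) (hC WC) nz (subsetIl _ _) _ cZ) ?eqxx ?andbT.
  by apply: contra_neq nz => ->.
by rewrite zW subsetUr.
Qed.

Lemma deletion_path Z0 p : Z0 \in Vdel -> Z0 e = T e ->
  path (ridge_adj Vdel) Z0 p ->
  (last Z0 p e = T e /\ connect R Z0 (last Z0 p)) \/
  (exists2 W, W \in Vcon & connect R Z0 W).
Proof.
elim: p Z0 => [|Z1 p IHp] Z0 Z0V Z0e /=; first by left; split=> //; exact: connect0.
case/andP=> a01 pth; have Z1V : Z1 \in Vdel by case/and4P: a01.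
case: (eqVneq (Z1 e) (T e)) => [Z1e|Z1e]; last first.
  by right; have [W WQ RW] := crossing_edge a01 Z0e Z1e; exists W => //; apply: connect1.
have R01 : R Z0 Z1.
  case/and4P: a01 => _ _ n01 c01.
  by rewrite /R /ridge_adj (Vdel_sub Z0V Z0e) (Vdel_sub Z1V Z1e) n01 c01.
case: (IHp Z1 Z1V Z1e pth) => [[le c]|[W WQ c]].
  by left; split=> //; exact: connect_trans (connect1 R01) c.
by right; exists W => //; exact: connect_trans (connect1 R01) c.
Qed.

Lemma move_off_e Z : Z \in V ->
  exists2 Z', (Z' \in V) && (e \notin zerset Z') & connect R Z Z'.
Proof.
move=> ZV; case: (boolP (e \in zerset Z)) => eZ; last first.
  by exists Z; rewrite ?ZV ?eZ // connect0.
have [ZC _ _ _] := face_verticesP ZV.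
have [Y YV /andP[nYZ sY]] := neighbour ZV eZ eL hD.
have [YC _ _ _] := face_verticesP YV.
have nz : zerset Z != zerset Y.
  by apply: contra_neq nYZ => ez; apply: face_zerset_inj YV ZV _.
have eY : e \notin zerset Y.
  apply: contra nz => eY; rewrite eqEcard (hC ZC) (hC YC) leqnn andbT.
  by rewrite -(setD1K eZ) subUset sub1set eY sY.
exists Y; first by rewrite YV eY.
apply: connect1; rewrite /R /ridge_adj ZV YV eq_sym nYZ /=; apply/eqP.
apply: (meet_ridge (hC ZC) (hC YC) nz (subD1set _ _) sY).
by have := cardsD1 e (zerset Z); rewrite eZ (hC ZC) => ->.
Qed.

Lemma reach_or_contract X Y : X \in V -> e \notin zerset X -> Y \in V ->
  e \notin zerset Y -> connect R X Y \/ exists2 W, W \in Vcon & connect R X W.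
Proof.
move=> XV eX YV eY; have [XV' Xe] := to_Vdel XV eX; have [YV' _] := to_Vdel YV eY.
case/connectP: (Vdel_connected XV' YV') => p pth ->.
by case: (deletion_path XV' Xe pth) => [[_ c]|]; [left|right].
Qed.

Lemma face_connected_step X Y : X \in V -> Y \in V -> connect R X Y.
Proof.
have Rsym : connect_sym R := sym_connect_sym (ridge_adj_sym V).
have Vcon_conn W1 W2 : W1 \in Vcon -> W2 \in Vcon -> connect R W1 W2.
  move=> W1Q W2Q; apply: connect_sub (Vcon_connected W1Q W2Q) => U1 U2.
  case/and4P=> U1Q U2Q nU cU; apply: connect1.
  by rewrite /R /ridge_adj (Vcon_sub U1Q) (Vcon_sub U2Q) nU cU.
move=> XV YV.
have [X' /andP[X'V eX'] cX] := move_off_e XV.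
have [Y' /andP[Y'V eY'] cY] := move_off_e YV.
apply: (connect_trans cX); rewrite Rsym; apply: (connect_trans cY); rewrite Rsym.
case: (reach_or_contract X'V eX' Y'V eY') => [//|[W WQ cW]].
case: (reach_or_contract Y'V eY' X'V eX') => [|[W' W'Q cW']]; first by rewrite Rsym.
apply: (connect_trans cW); apply: (connect_trans (Vcon_conn _ _ WQ W'Q)).
by rewrite Rsym.
Qed.

End ConnectivityStep.

Lemma face_connected n D L : #|~: (D :|: L)| <= n -> m < #|~: D| ->
  forall X Y, X \in face_vertices D L -> Y \in face_vertices D L ->
  connect (ridge_adj (face_vertices D L)) X Y.
Proof.
elim: n D L => [|n IH] D L hn hD X Y XV YV.
  have e0 : ~: (D :|: L) = set0 by apply/eqP; rewrite -cards_eq0 -leqn0.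
  by rewrite (negbTE (face_vertices_empty X hD e0)) in XV.
case: (eqVneq #|~: D| m.+1) => [hD1|hD1]; first exact: face_vertices_adjacent.
have hD2 : m.+1 < #|~: D| by rewrite ltn_neqAle eq_sym hD1.
case: (set_0Vmem (~: (D :|: L))) => [e0|[e eDL]].
  by rewrite (negbTE (face_vertices_empty X hD e0)) in XV.
move: (eDL); rewrite in_setC in_setU negb_or => /andP[eD eL].
have hn' : #|~: ((e |: D) :|: L)| <= n.
  have sub : ~: ((e |: D) :|: L) \subset ~: (D :|: L) :\ e.
    apply/subsetP=> x; rewrite !inE !negb_or => /andP[/andP[xe xD] xL].
    by rewrite xe xD xL.
  have := subset_leq_card sub; have := cardsD1 e (~: (D :|: L)); rewrite eDL.
  by move: hn; clear; lia.
have hDe : m < #|~: (e |: D)|.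
  have -> : ~: (e |: D) = ~: D :\ e by apply/setP=> x; rewrite !inE negb_or.
  have := cardsD1 e (~: D); rewrite in_setC eD /=.
  by move: hD2; clear; lia.
apply: (face_connected_step eD eL hD) XV YV => X1 Y1 X1V Y1V; apply: IH => //.
by rewrite setUA (setUC D [set e]).
Qed.

Definition tope_vertices : {set svec E} := face_vertices set0 set0.
Definition vertex_zerosets : {set {set E}} := [set zerset X | X in tope_vertices].

(* The cocircuits below T are exactly those agreeing with T where nonzero;
   none equals T since T has full support and cocircuits have zeros. *)
Lemma tope_vertices_below : [set X in C | slt X T] = tope_vertices.
Proof.
apply/setP=> X; rewrite [X \in tope_vertices]inE [X \in [set _ in _ | _]]inE.
rewrite setI0 sub0set eqxx /=; case: (boolP (X \in C)) => //= XC.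
have nXT : X != T.
  have [e eX] : exists e, e \in zerset X by apply/set0Pn; rewrite -card_gt0 hC.
  by apply: contraTneq eX => ->; rewrite in_zerset (negbTE (Tfull e)).
by rewrite /slt /sle nXT andbT; apply: eq_forallb => f; rewrite in_set0.
Qed.

Let ground_off0 : m < #|~: (@set0 E)|.
Proof. by rewrite setC0 cardsT; apply: ground_large hT. Qed.

Lemma tope_zerset_inj : {in tope_vertices &, injective (@zerset E)}.
Proof. by move=> X Y XV YV; apply: face_zerset_inj XV YV. Qed.

Lemma vertex_zerosetsP P : P \in vertex_zerosets ->
  exists2 X, X \in tope_vertices & P = zerset X.
Proof. by case/imsetP=> X XV ->; exists X. Qed.

Lemma in_vertex_zerosets X : X \in tope_vertices -> zerset X \in vertex_zerosets.
Proof. exact: imset_f. Qed.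

Lemma tope_vertex_cocircuit X : X \in tope_vertices -> X \in C.
Proof. by case/face_verticesP. Qed.

(* If X0, X1, X2 below T
   have zero sets a |: S, b |: S, c |: S with c distinct from a and b,
   eliminating c between X0 and -X1 gives a cocircuit with zero set
   c |: S, hence equal to +-X2, but it agrees with T at b and opposes T at a. *)
Lemma ridge_at_most_two (S : {set E}) a b c X0 X1 X2 :
  X0 \in tope_vertices -> X1 \in tope_vertices -> X2 \in tope_vertices ->
  zerset X0 = a |: S -> zerset X1 = b |: S -> zerset X2 = c |: S ->
  a != b -> a \notin S -> b \notin S -> c \notin S -> (c == a) || (c == b).
Proof.
move=> X0V X1V X2V z0 z1 z2 ab aS bS cS.
case: (eqVneq c a) => //= ca; case: (eqVneq c b) => //= cb; exfalso.
have ac : a != c by rewrite eq_sym.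
have bc : b != c by rewrite eq_sym.
have ba : b != a by rewrite eq_sym.
have agree X x y : X \in tope_vertices -> zerset X = x |: S -> y != x ->
    y \notin S -> X y = T y.
  move=> XV zX yx yS; apply: face_vertex_agrees XV (negbT (in_set0 y)) _.
  by rewrite zX in_setU1 negb_or yx.
have [X0C X1C X2C] := And3 (tope_vertex_cocircuit X0V) (tope_vertex_cocircuit X1V)
  (tope_vertex_cocircuit X2V).
have [t Tc] := some_of_nonzero (Tfull c).
have X0c : X0 c = Some t by rewrite (agree X0 a) // Tc.
have X1'c : oppv X1 c = Some (~~ t) by rewrite ffunE (agree X1 b) // Tc.
have nopp : X0 <> oppv (oppv X1).
  rewrite oppvK => e01; have : a \in zerset X1 by rewrite -e01 z0 setU11.
  by rewrite z1 in_setU1 (negbTE ab) (negbTE aS).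
have [Z ZC [Zc hZ]] := eliminate el X0C (Copp X1C) nopp X0c X1'c.
have zZ : zerset Z = zerset X2.
  rewrite z2; apply: eliminant_zerset hC ZC Zc hZ _ _.
    by rewrite zerset_opp z0 z1 subsetI !subsetUr.
  by rewrite -z2 hC.
have Zopp_a : Z a = omap negb (T a).
  have : a \notin zerset Z by rewrite zZ z2 in_setU1 negb_or ac aS.
  rewrite in_zerset => /some_of_nonzero [za Za]; rewrite Za.
  case: (hZ _ _ Za); first by move: (setU11 a S); rewrite -z0 in_zerset => /eqP ->.
  by rewrite ffunE (agree X1 b) // => ->.
have Zb : Z b = T b.
  have : b \notin zerset Z by rewrite zZ z2 in_setU1 negb_or bc bS.
  rewrite in_zerset => /some_of_nonzero [zb Zb]; rewrite Zb.
  case: (hZ _ _ Zb) => [<-|]; first by rewrite (agree X0 a).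
  by move: (setU11 b S); rewrite -z1 in_zerset ffunE => /eqP ->.
have [ta Ta] := some_of_nonzero (Tfull a); have [tb Tb] := some_of_nonzero (Tfull b).
case: (support_determines hT ZC X2C); first by rewrite !supp_zerset zZ.
  by move=> eZ; move: Zopp_a; rewrite eZ (agree X2 c) // Ta; case: (ta).
by move=> eZ; move: Zb; rewrite eZ ffunE (agree X2 c) // Tb; case: (tb).
Qed.


Lemma tope_sepset X Y : X \in tope_vertices -> Y \in tope_vertices ->
  sepset X Y = set0.
Proof.
case/face_verticesP=> _ _ _ hX /face_verticesP[_ _ _ hY].
apply/setP=> e; rewrite in_set0 !inE; have [t Te] := some_of_nonzero (Tfull e).
case: (hX e (negbT (in_set0 e))) => ->; case: (hY e (negbT (in_set0 e))) => ->;
  by rewrite ?Te //=; case: (t).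
Qed.

Lemma abs_adj_zerset X Y : X \in tope_vertices -> Y \in tope_vertices ->
  abs_adj vertex_zerosets m (zerset X) (zerset Y) =
  (X != Y) && (m.-1 <= #|zerset X :&: zerset Y|).
Proof.
move=> XV YV; rewrite /abs_adj !in_vertex_zerosets //=.
case: (eqVneq X Y) => [->|nXY]; first by rewrite eqxx.
have nz : zerset X != zerset Y by apply: contra_neq nXY; apply: tope_zerset_inj.
have lt := meet_lt (hC (tope_vertex_cocircuit XV)) (hC (tope_vertex_cocircuit YV)) nz.
rewrite nz /=; apply/existsP/idP => [[S /and3P[/eqP cS SX SY]]|h].
  by rewrite -cS; apply: subset_leq_card; rewrite subsetI SX SY.
exists (zerset X :&: zerset Y); rewrite subsetIl subsetIr !andbT.
by apply/eqP; move: h lt; clear; lia.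
Qed.

Lemma face_path_zerset (L : {set E}) X p :
  path (ridge_adj (face_vertices set0 L)) X p ->
  path (abs_adj vertex_zerosets m) (zerset X) (map (@zerset E) p) /\
  all (fun Z : {set E} => L \subset Z) (map (@zerset E) p).
Proof.
have in_tope U : U \in face_vertices set0 L -> U \in tope_vertices.
  by case/face_verticesP=> UC _ _ hU; apply: face_verticesI; rewrite ?sub0set ?setI0.
elim: p X => [|U p IHp] X //= /andP[/and4P[XV UV nXU /eqP cXU] pth].
have [-> ->] := IHp U pth; rewrite !andbT; split; last by case/face_verticesP: UV.
by rewrite abs_adj_zerset ?in_tope // nXU cXU leqnn.
Qed.

Lemma vertex_zerosets_ridge (S : {set E}) : #|S| = m.-1 ->
  #|[set P in vertex_zerosets | S \subset P]| = 0 \/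
  #|[set P in vertex_zerosets | S \subset P]| = 2.
Proof.
move=> cS; case: (set_0Vmem [set P in vertex_zerosets | S \subset P]) => [->|[P0]].
  by left; rewrite cards0.
rewrite inE => /andP[/vertex_zerosetsP [X0 X0V ->] SX0]; right.
have zsplit X : X \in tope_vertices -> S \subset zerset X ->
    exists2 x, zerset X = x |: S & x \notin S.
  by move=> XV SX; apply: ridge_split m_gt0 (hC (tope_vertex_cocircuit XV)) SX cS.
have [a zX0 aS] := zsplit X0 X0V SX0.
have aX0 : a \in zerset X0 by rewrite zX0 setU11.
have [X1 X1V /andP[n10]] := neighbour X0V aX0 (negbT (in_set0 a)) ground_off0.
rewrite zX0 setU1K // => SX1.
have nz : zerset X1 != zerset X0 by apply: contra_neq n10; apply: tope_zerset_inj.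
have [b zX1 bS] := zsplit X1 X1V SX1.
have ab : a != b by apply: contra_neq nz => eab; rewrite zX1 zX0 eab.
suff -> : [set P in vertex_zerosets | S \subset P] = [set zerset X0; zerset X1].
  by rewrite cards2 eq_sym nz.
apply/setP=> P; rewrite inE !in_set2; apply/andP/orP => [[]|].
  case/vertex_zerosetsP=> X2 X2V -> SX2; have [c zX2 cS'] := zsplit X2 X2V SX2.
  case/orP: (ridge_at_most_two X0V X1V X2V zX0 zX1 zX2 ab aS bS cS') => /eqP ec.
    by left; rewrite zX2 zX0 ec.
  by right; rewrite zX2 zX1 ec.
by case=> /eqP ->; rewrite in_vertex_zerosets.
Qed.

(* Axiom (iii): two vertices are joined by a path of adjacent vertices all
   containing their intersection, because the face at that intersection
   is connected. *)
Lemma vertex_zerosets_connected P Q : P \in vertex_zerosets ->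
  Q \in vertex_zerosets ->
  exists s : seq {set E}, [/\ path (abs_adj vertex_zerosets m) P s, last P s = Q &
    all (fun Z : {set E} => P :&: Q \subset Z) (P :: s)].
Proof.
case/vertex_zerosetsP=> X XV -> /vertex_zerosetsP[Y YV ->].
set L := zerset X :&: zerset Y.
have to_face U : U \in tope_vertices -> L \subset zerset U -> U \in face_vertices set0 L.
  by case/face_verticesP=> UC _ _ hU LU; apply: face_verticesI; rewrite ?setI0.
have XL := to_face X XV (subsetIl _ _); have YL := to_face Y YV (subsetIr _ _).
case/connectP: (face_connected (leqnn _) ground_off0 XL YL) => p pth ->.
have [pth' allp] := face_path_zerset pth.
by exists (map (@zerset E) p); rewrite last_map /= subsetIl allp.
Qed.

Lemma cocirc_adj_zerset X Y : X \in tope_vertices -> Y \in tope_vertices ->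
  cocirc_adj m.+1 X Y = abs_adj vertex_zerosets m (zerset X) (zerset Y).
Proof.
move=> XV YV; rewrite abs_adj_zerset // /cocirc_adj tope_sepset // eqxx andbT.
by rewrite subSS subn1.
Qed.

End TopeGraph.

Lemma cocircuit_of_chain (E : finType) (C : {set svec E}) k :
  has_chain C k.+1 -> exists X, X \in C.
Proof.
case=> W [W0 Wc Wl]; have W1 : W 1 != zerov E.
  by have := Wl 0 isT; rewrite W0 => /andP[_]; rewrite eq_sym.
by have [Y YC _] := covector_above_cocircuit (Wc 1 isT) W1; exists Y.
Qed.

(* A tope vanishes nowhere that some cocircuit does not: otherwise composing
   it with that cocircuit would give a strictly larger covector. *)
Lemma tope_full_support (E : finType) (C : {set svec E}) T : is_tope C T ->
  (forall e, exists2 X, X \in C & X e != None) -> forall e, T e != None.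
Proof.
move=> [[s [hs Ts]] Tmax] hnz e; apply/negP=> /eqP Te.
have [X XC Xe] := hnz e; apply: Tmax; exists (foldr (@compv E) X s); split.
  exists (s ++ [:: X]); split; first by rewrite all_cat hs /= XC.
  rewrite foldr_cat /=; congr foldr; apply/ffunP=> g; rewrite !ffunE; by case: (X g).
apply/andP; split.
  apply/forallP=> g; rewrite composition_onto -Ts.
  by case: (T g) => [b|] //=; rewrite eqxx orbT.
apply/eqP=> eT; have := congr1 (fun V : svec E => V e) eT.
by rewrite /= composition_onto -Ts Te => h; rewrite -h in Xe.
Qed.

Lemma uniform_tope_of (E : finType) (C : {set svec E}) r T :
  is_OM C -> is_rank C r -> 2 <= r -> uniform C r -> is_tope C T ->
  uniform_tope C r.-1 T.
Proof.
move=> [C0 Copp cc2 el] [hch _] r2 unif hT.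
have hC X : X \in C -> #|zerset X| = r.-1 by move=> XC; rewrite unif // subn1.
have hch' : has_chain C r.-1.+1 by rewrite prednK // ltnW.
have surj (H : {set E}) : #|H| = r.-1 -> exists2 X, X \in C & zerset X = H.
  move=> cH; apply: (zerset_onto Copp el _ hch' (sub0set H)); last by rewrite cards0.
  by move=> X XC; rewrite sub0set cards0 hC.
have [Y0 Y0C] := cocircuit_of_chain hch'.
have [f0 f0Y] : exists f, f \notin zerset Y0.
  apply/existsP; rewrite -negb_forall; apply: contra C0 => /forallP h.
  suff <- : Y0 = zerov E by [].
  by apply/ffunP=> x; rewrite ffunE; apply/eqP; rewrite -in_zerset.
have ground : r.-1 < #|E|.
  rewrite -(hC _ Y0C) -cardsT; apply: proper_card; rewrite properE subsetT /=.
  by apply/subsetPn; exists f0.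
have nonzero_at e : exists2 X, X \in C & X e != None.
  case: (boolP (Y0 e == None)) => Y0e; last by exists Y0.
  have f0e : f0 != e by apply: contraNneq f0Y => ->; rewrite in_zerset.
  have [X XC zX] : exists2 X, X \in C & zerset X = f0 |: (zerset Y0 :\ e).
    apply: surj; rewrite cardsU1 in_setD1 (negbTE f0Y) andbF /=.
    by have := cardsD1 e (zerset Y0); rewrite in_zerset Y0e hC // => ->.
  by exists X => //; rewrite -in_zerset zX in_setU1 in_setD1 eqxx /= orbF eq_sym.
split=> //; first exact: tope_full_support nonzero_at.
by rewrite -ltnS prednK // ltnW.
Qed.

Theorem lemma2p4 (E : finType) (C : {set svec E}) (r : nat) (T : svec E) :
  is_OM C -> is_rank C r -> 2 <= r -> uniform C r -> is_tope C T ->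
  let CT := [set X in C | slt X T] in
  let A := [set zerset X | X in CT] in
  abstract_polytope A (r - 1) /\
  {in CT &, injective (@zerset E)} /\
  (forall X Y, X \in CT -> Y \in CT ->
     cocirc_adj r X Y = abs_adj A (r - 1) (zerset X) (zerset Y)).
Proof.
case: r => [//|m] OM rank r2 unif tope CT A; subst CT A.
have hT : uniform_tope C m T := uniform_tope_of OM rank r2 unif tope.
rewrite subn1 /= (tope_vertices_below hT); split; [split|split].
- move=> P /vertex_zerosetsP[X XV ->].
  exact/(zerset_card hT)/tope_vertex_cocircuit/XV.
- exact: vertex_zerosets_ridge hT.
- by move=> P Q PA QA _; exact: (vertex_zerosets_connected hT PA QA).
- exact: tope_zerset_inj hT.
- exact: cocirc_adj_zerset hT.
Qed.
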